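(* As $r\to0$, $\zeta_0(r)=\frac2\pi+O(r^2)$ and $\zeta_2(r)=\frac2\pi+O(r^2)$. As $r\to\infty$, $\zeta_0(r)=\frac{A_0}{r}(1+O(1/r^2))$ and $\zeta_2(r)=\frac{A_2}{r^3}(1+O(1/r^2))$.
   Context: $\phi(t)=\frac{1}{\sqrt{2\pi}}e^{-t^2/2}$, $Q(x)=\int_x^\infty\phi(t)dt$, $\xi(s):=\frac{\phi^2(s)}{Q(s)(1-Q(s))}$, and $\zeta_k(t):=\mathbb{E}[S^k\xi(tS)]$ for $S\sim\mathcal{N}(0,1)$. $A_0:=\frac{1}{\sqrt{2\pi}}\int_{-\infty}^{\infty}\xi(u)du$ and $A_2:=\frac{1}{\sqrt{2\pi}}\int_{-\infty}^{\infty}\xi(u)u^2du$. *)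

From Stdlib Require Import Reals.
From Coquelicot Require Import Coquelicot.
Open Scope R_scope.

Definition phi (t : R) : R := / sqrt (2 * PI) * exp (- t ^ 2 / 2).

Definition Q (x : R) : R :=
  RInt_gen phi (at_point x) (Rbar_locally p_infty).

Definition xi (s : R) : R := (phi s) ^ 2 / (Q s * (1 - Q s)).

(* zeta_k(t) = E[S^k xi(t S)], S ~ N(0,1), written as the integral
   against the standard normal density over the whole real line. *)
Definition zeta (k : nat) (t : R) : R :=
  RInt_gen (fun s => s ^ k * xi (t * s) * phi s)
    (Rbar_locally m_infty) (Rbar_locally p_infty).

Definition A0 : R :=
  / sqrt (2 * PI) * RInt_gen xi (Rbar_locally m_infty) (Rbar_locally p_infty).

Definition A2 : R :=
  / sqrt (2 * PI) *
  RInt_gen (fun u => xi u * u ^ 2) (Rbar_locally m_infty) (Rbar_locally p_infty).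

From Stdlib Require Import Reals Lra Psatz.
From Coquelicot Require Import Coquelicot.
Open Scope R_scope.

(** For even [k] the integrands of [zeta_k] and [A_k] are even, so these integrals are
    twice integrals over [[0, +oo)].  With [phi_int x = ∫_0^x phi] we have
    [Q = 1/2 - phi_int] and [Q (1 - Q) = 1/4 - phi_int^2 >= phi (|s| + 1) / 2], since the
    tail beyond [|s|] contains the mass of [[|s|, |s| + 1]].  Hence
    [xi s <= C exp (- s^2/2 + |s|)], which makes all the integrals converge, and near [0]
    [xi s = 4 phi(0)^2 + O(s^2) = 2/PI + O(s^2)].
    As [r -> 0] this gives [|zeta_k r - (2/PI) E[S^k]| <= C r^2 E[S^(k+2)]], where
    [E[S^0] = E[S^2] = 1].  As [r -> +oo] the substitution [u = r s] gives
    [r^(k+1) zeta_k r = 2 ∫_0^oo xi(u) u^k phi(u/r) du], and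
    [0 <= phi 0 - phi (u/r) <= phi 0 u^2 / (2 r^2)] yields
    [r^(k+1) zeta_k r = A_k + O(A_(k+2) / r^2)]. *)

(** * Integrals over the half-line *)

Definition continuous_everywhere (f : R -> R) := forall x, continuous f x.

Lemma continuous_everywhere_derive (f : R -> R) :
  (forall x, ex_derive f x) -> continuous_everywhere f.
Proof. intros Hd x; apply (ex_derive_continuous (K:=R_AbsRing) (V:=R_NormedModule)), Hd. Qed.

Create HintDb ex_derive.

Ltac solve_continuity :=
  apply continuous_everywhere_derive; intro; auto_derive; repeat split; auto with ex_derive.

Lemma continuous_everywhere_minus (f g : R -> R) :
  continuous_everywhere f -> continuous_everywhere g ->
  continuous_everywhere (fun x => f x - g x).
Proof. intros Hf Hg x; apply (continuous_minus (V:=R_NormedModule)); auto. Qed.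

Lemma continuous_everywhere_scal (k : R) (f : R -> R) :
  continuous_everywhere f -> continuous_everywhere (fun x => k * f x).
Proof. intros Hf x; apply (continuous_scal_r (K:=R_AbsRing) (V:=R_NormedModule)), Hf. Qed.

Lemma continuous_everywhere_comp_scal (r : R) (f : R -> R) :
  continuous_everywhere f -> continuous_everywhere (fun x => f (r * x)).
Proof.
intros Hf x; apply (continuous_comp (fun x => r * x) f); [|apply Hf].
apply (ex_derive_continuous (K:=R_AbsRing) (V:=R_NormedModule)); auto_derive; auto.
Qed.

Lemma ex_RInt_continuous_everywhere (f : R -> R) (a b : R) :
  continuous_everywhere f -> ex_RInt f a b.
Proof. intros Hf; apply (ex_RInt_continuous (V:=R_CompleteNormedModule)); intros; apply Hf. Qed.

#[local] Hint Resolve ex_RInt_continuous_everywhere : core.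

Lemma RInt_Chasles_R (f : R -> R) (a b c : R) :
  continuous_everywhere f -> RInt f a b + RInt f b c = RInt f a c.
Proof. intros Hf; apply (RInt_Chasles (V:=R_CompleteNormedModule)); auto. Qed.

Lemma RInt_abs_le (f g : R -> R) (u v : R) :
  continuous_everywhere f -> continuous_everywhere g -> u <= v ->
  (forall x, u <= x <= v -> Rabs (f x) <= g x) -> Rabs (RInt f u v) <= RInt g u v.
Proof.
intros Hf Hg Huv Hb.
apply Rle_trans with (1 := abs_RInt_le f u v Huv (ex_RInt_continuous_everywhere f u v Hf)).
apply RInt_le; auto.
- apply ex_RInt_continuous_everywhere; intro x; apply (continuous_comp f Rabs); auto.
  apply continuous_Rabs.
- intros x Hx; apply Hb; lra.
Qed.

Definition is_RInt_0_infty (f : R -> R) (L : R) :=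
  is_lim (fun b => RInt f 0 b) p_infty L.

Definition ex_RInt_0_infty (f : R -> R) := exists L, is_RInt_0_infty f L.

Lemma is_RInt_gen_at_point_p_infty (f : R -> R) (x L : R) :
  continuous_everywhere f -> is_lim (fun b => RInt f x b) p_infty L ->
  is_RInt_gen f (at_point x) (Rbar_locally p_infty) L.
Proof.
intros Hf Hl P HP.
apply Filter_prod with (fun a => a = x) (fun b => P (RInt f x b)); [reflexivity|exact (Hl P HP)|].
intros a b -> Hb; exists (RInt f x b); split; auto.
apply (RInt_correct (V:=R_CompleteNormedModule)); auto.
Qed.

Lemma is_RInt_gen_m_infty_at_point (f : R -> R) (x L : R) :
  continuous_everywhere f -> is_lim (fun a => RInt f a x) m_infty L ->
  is_RInt_gen f (Rbar_locally m_infty) (at_point x) L.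
Proof.
intros Hf Hl P HP.
apply Filter_prod with (fun a => P (RInt f a x)) (fun b => b = x); [exact (Hl P HP)|reflexivity|].
intros a b Ha ->; exists (RInt f a x); split; auto.
apply (RInt_correct (V:=R_CompleteNormedModule)); auto.
Qed.

Lemma RInt_reflect_even (f : R -> R) (a : R) :
  continuous_everywhere f -> (forall x, f (- x) = f x) -> RInt f a 0 = RInt f 0 (- a).
Proof.
intros Hf He.
rewrite <- (opp_RInt_swap (V:=R_CompleteNormedModule)) by auto.
assert (H := RInt_comp_lin f (-1) 0 0 a).
replace (-1 * 0 + 0) with 0 in H by ring; replace (-1 * a + 0) with (- a) in H by ring.
rewrite <- H by auto.
rewrite (RInt_ext (fun y => scal (-1) (f (-1 * y + 0))) (fun y => opp (f y))).
- rewrite (RInt_opp (V:=R_CompleteNormedModule)) by auto.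
  reflexivity.
- intros x _; unfold scal; simpl; unfold mult, opp; simpl.
  replace (-1 * x + 0) with (- x) by ring; rewrite He; ring.
Qed.

Lemma is_RInt_gen_even (f : R -> R) (L : R) :
  continuous_everywhere f -> (forall x, f (- x) = f x) -> is_RInt_0_infty f L ->
  is_RInt_gen f (Rbar_locally m_infty) (Rbar_locally p_infty) (2 * L).
Proof.
intros Hf He Hl.
replace (2 * L) with (plus L L) by (unfold plus; simpl; ring).
apply (is_RInt_gen_Chasles (V:=R_NormedModule)) with 0.
- apply is_RInt_gen_m_infty_at_point; auto.
  apply (is_lim_ext (fun a => RInt f 0 (- a))).
  { intros a; symmetry; apply RInt_reflect_even; auto. }
  apply (is_lim_comp (fun b => RInt f 0 b) Ropp m_infty L p_infty); auto.
  + apply (is_lim_opp (fun x => x) m_infty m_infty), is_lim_id.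
  + exists 0; intros; discriminate.
- apply is_RInt_gen_at_point_p_infty; auto.
Qed.

Lemma RInt_gen_even (f : R -> R) (L : R) :
  continuous_everywhere f -> (forall x, f (- x) = f x) -> is_RInt_0_infty f L ->
  RInt_gen f (Rbar_locally m_infty) (Rbar_locally p_infty) = 2 * L.
Proof. intros; apply (is_RInt_gen_unique (V:=R_CompleteNormedModule)), is_RInt_gen_even; auto. Qed.

Lemma is_RInt_0_infty_ext (f g : R -> R) (L : R) :
  (forall x, 0 <= x -> f x = g x) -> is_RInt_0_infty f L -> is_RInt_0_infty g L.
Proof.
intros He; apply is_lim_ext_loc; exists 0; intros b Hb; apply RInt_ext.
intros x Hx; rewrite Rmin_left in Hx by lra; apply He; lra.
Qed.

Lemma is_RInt_0_infty_minus (f g : R -> R) (Lf Lg : R) :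
  continuous_everywhere f -> continuous_everywhere g ->
  is_RInt_0_infty f Lf -> is_RInt_0_infty g Lg ->
  is_RInt_0_infty (fun x => f x - g x) (Lf - Lg).
Proof.
intros Hf Hg H1 H2; apply (is_lim_ext (fun b => RInt f 0 b - RInt g 0 b)).
- intros b; symmetry; apply (RInt_minus (V:=R_CompleteNormedModule)); auto.
- apply is_lim_minus'; auto.
Qed.

Lemma is_RInt_0_infty_scal (k : R) (f : R -> R) (L : R) :
  continuous_everywhere f -> is_RInt_0_infty f L -> is_RInt_0_infty (fun x => k * f x) (k * L).
Proof.
intros Hf H; apply (is_lim_ext (fun b => k * RInt f 0 b)).
- intros b; symmetry; apply (RInt_scal (V:=R_CompleteNormedModule)); auto.
- apply (is_lim_scal_l _ k _ L), H.
Qed.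

Lemma is_RInt_0_infty_abs_le (f g : R -> R) (Lf Lg : R) :
  continuous_everywhere f -> continuous_everywhere g ->
  (forall x, 0 <= x -> Rabs (f x) <= g x) ->
  is_RInt_0_infty f Lf -> is_RInt_0_infty g Lg -> Rabs Lf <= Lg.
Proof.
intros Hf Hg Hb H1 H2.
assert (Ha : is_lim (fun b => Rabs (RInt f 0 b)) p_infty (Rabs Lf)).
{ apply (is_lim_comp_continuous (fun b => RInt f 0 b) Rabs); auto.
  intros; apply continuous_Rabs. }
refine (is_lim_le_loc _ _ _ _ _ _ Ha H2).
exists 0; intros b Hb0; apply RInt_abs_le; auto; try lra.
intros x Hx; apply Hb; lra.
Qed.

Lemma is_RInt_0_infty_dist_le (f g h : R -> R) (Lf Lg Lh : R) :
  continuous_everywhere f -> continuous_everywhere g -> continuous_everywhere h ->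
  (forall x, 0 <= x -> Rabs (f x - g x) <= h x) ->
  is_RInt_0_infty f Lf -> is_RInt_0_infty g Lg -> is_RInt_0_infty h Lh ->
  Rabs (Lf - Lg) <= Lh.
Proof.
intros Hf Hg Hh Hb H1 H2 H3.
apply (is_RInt_0_infty_abs_le (fun x => f x - g x) h); auto.
- apply continuous_everywhere_minus; auto.
- apply is_RInt_0_infty_minus; auto.
Qed.

Lemma RInt_le_is_RInt_0_infty (f : R -> R) (b L : R) :
  continuous_everywhere f -> 0 <= b -> (forall x, 0 <= x -> 0 <= f x) ->
  is_RInt_0_infty f L -> RInt f 0 b <= L.
Proof.
intros Hf Hb Hp H.
refine (is_lim_le_loc _ _ _ _ _ _ (is_lim_const (RInt f 0 b) p_infty) H).
exists b; intros c Hc; rewrite <- (RInt_Chasles_R f 0 b c) by auto.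
assert (0 <= RInt f b c) by (apply RInt_ge_0; [lra|auto|intros; apply Hp; lra]).
lra.
Qed.

Lemma RInt_0_dist_le (f g : R -> R) (u v : R) :
  continuous_everywhere f -> continuous_everywhere g ->
  (forall x, 0 <= x -> Rabs (f x) <= g x) -> 0 <= u -> 0 <= v ->
  Rabs (RInt f 0 v - RInt f 0 u) <= Rabs (RInt g 0 v - RInt g 0 u).
Proof.
intros Hf Hg Hb.
assert (Hle : forall u v, 0 <= u <= v ->
  Rabs (RInt f 0 v - RInt f 0 u) <= Rabs (RInt g 0 v - RInt g 0 u)).
{ intros a b Hab.
  rewrite <- (RInt_Chasles_R f 0 a b), <- (RInt_Chasles_R g 0 a b) by auto.
  replace (RInt f 0 a + RInt f a b - RInt f 0 a) with (RInt f a b) by lra.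
  replace (RInt g 0 a + RInt g a b - RInt g 0 a) with (RInt g a b) by lra.
  apply Rle_trans with (RInt g a b); [|apply Rle_abs].
  apply RInt_abs_le; [exact Hf|exact Hg|lra|intros x Hx; apply Hb; lra]. }
intros Hu Hv; destruct (Rle_lt_dec u v).
- apply Hle; lra.
- rewrite Rabs_minus_sym, (Rabs_minus_sym (RInt g 0 v)); apply Hle; lra.
Qed.

Lemma is_RInt_0_infty_dominated (f g : R -> R) (Lg : R) :
  continuous_everywhere f -> continuous_everywhere g ->
  (forall x, 0 <= x -> Rabs (f x) <= g x) -> is_RInt_0_infty g Lg ->
  ex_RInt_0_infty f.
Proof.
intros Hf Hg Hb H.
assert (Hc : exists L, filterlim (fun b => RInt f 0 b) (Rbar_locally p_infty) (locally L)).
{ apply (filterlim_locally_cauchy (U := R_CompleteSpace) (F := Rbar_locally p_infty)).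
  intros eps.
  assert (He : 0 < eps / 2) by (destruct eps; simpl; lra).
  destruct (H (fun y => Rabs (y - Lg) < eps / 2)) as [M HM].
  { exists (mkposreal _ He); intros y Hy; exact Hy. }
  exists (fun b => Rmax M 0 < b); split; [exists (Rmax M 0); auto|].
  intros u v Hu Hv.
  assert (HMu := HM u (Rle_lt_trans _ _ _ (Rmax_l M 0) Hu)).
  assert (HMv := HM v (Rle_lt_trans _ _ _ (Rmax_l M 0) Hv)).
  assert (Hu0 := Rle_lt_trans _ _ _ (Rmax_r M 0) Hu).
  assert (Hv0 := Rle_lt_trans _ _ _ (Rmax_r M 0) Hv).
  change (Rabs (RInt f 0 v - RInt f 0 u) < eps).
  apply Rle_lt_trans with (Rabs (RInt g 0 v - RInt g 0 u));
    [apply (RInt_0_dist_le f g); auto; lra|].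
  simpl in HMu, HMv.
  replace (RInt g 0 v - RInt g 0 u) with ((RInt g 0 v - Lg) - (RInt g 0 u - Lg)) by lra.
  eapply Rle_lt_trans; [apply Rabs_triang|rewrite Rabs_Ropp; lra]. }
destruct Hc as [L HL]; exists L; exact HL.
Qed.

Lemma is_RInt_0_infty_comp_scal (f : R -> R) (L r : R) :
  continuous_everywhere f -> 0 < r -> is_RInt_0_infty f L ->
  is_RInt_0_infty (fun s => f (r * s)) (L / r).
Proof.
intros Hf Hr Hl.
apply (is_lim_ext (fun b => / r * RInt f 0 (r * b))).
{ intros b.
  assert (H := RInt_comp_lin f r 0 0 b).
  replace (r * 0 + 0) with 0 in H by ring; replace (r * b + 0) with (r * b) in H by ring.
  rewrite <- H by auto.
  rewrite <- (RInt_scal (V:=R_CompleteNormedModule)).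
  - apply RInt_ext; intros x _; unfold scal; simpl; unfold mult; simpl.
    replace (r * x + 0) with (r * x) by ring; field; lra.
  - apply ex_RInt_continuous_everywhere.
    intro x; apply (continuous_ext (fun y => r * f (r * y))).
    { intros; unfold scal; simpl; unfold mult; simpl; rewrite Rplus_0_r; reflexivity. }
    apply continuous_everywhere_scal, continuous_everywhere_comp_scal, Hf. }
assert (Hrb : is_lim (fun b => r * b) p_infty p_infty).
{ intros P [M HM]; exists (M / r); intros b Hb; apply HM.
  apply Rmult_lt_compat_l with (r := r) in Hb; [|lra].
  replace (r * (M / r)) with M in Hb by (field; lra); exact Hb. }
replace (Finite (L / r)) with (Rbar_mult (/ r) L) by (simpl; f_equal; unfold Rdiv; ring).
apply (is_lim_scal_l _ (/ r) p_infty L).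
apply (is_lim_comp (fun b => RInt f 0 b) (fun b => r * b) p_infty L p_infty); auto.
exists 0; intros; discriminate.
Qed.

Lemma is_lim_exp_neg : is_lim (fun x => exp (- x)) p_infty 0.
Proof.
apply (is_lim_comp exp Ropp p_infty 0 m_infty).
- apply is_lim_exp_m.
- apply (is_lim_opp (fun x => x) p_infty p_infty), is_lim_id.
- exists 0; intros; discriminate.
Qed.

Lemma is_RInt_0_infty_exp_neg : is_RInt_0_infty (fun x => exp (- x)) 1.
Proof.
apply (is_lim_ext (fun b => 1 - exp (- b))).
- intros b; symmetry; apply is_RInt_unique.
  replace (1 - exp (- b)) with (minus (- exp (- b)) (- exp (- 0))).
  2:{ unfold minus, plus, opp; simpl; rewrite Ropp_0, exp_0; ring. }
  apply (is_RInt_derive (fun x => - exp (- x))).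
  + intros x _; auto_derive; auto; ring.
  + intros x _; apply (ex_derive_continuous (K:=R_AbsRing) (V:=R_NormedModule)); auto_derive; auto.
- generalize (is_lim_minus' _ _ p_infty 1 0 (is_lim_const 1 p_infty) is_lim_exp_neg).
  rewrite Rminus_0_r; exact (fun H => H).
Qed.

(** * The Gaussian integral *)

Lemma exp_le_exp (x y : R) : x <= y -> exp x <= exp y.
Proof. intros [H|<-]; [left; apply exp_increasing|right]; auto. Qed.

Lemma is_derive_0_const (h : R -> R) :
  (forall x, is_derive h x 0) -> forall x, h x = h 0.
Proof.
intros Hd x.
assert (H := is_RInt_derive (V:=R_CompleteNormedModule) h (fun _ => 0) 0 x
  (fun y _ => Hd y) (fun y _ => continuous_const 0 y)).
apply (is_RInt_unique (V:=R_CompleteNormedModule)) in H.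
rewrite RInt_const in H; unfold minus, plus, opp, scal in H; simpl in H; unfold mult in H; simpl in H.
lra.
Qed.

Definition gauss (t : R) := exp (- t ^ 2 / 2).

Lemma gauss_pos (x : R) : 0 < gauss x.
Proof. apply exp_pos. Qed.

Lemma gauss_le_1 (x : R) : gauss x <= 1.
Proof. unfold gauss; rewrite <- exp_0; apply exp_le_exp; nra. Qed.

Lemma gauss_mul (x t : R) : gauss x * gauss (x * t) = exp (- (x ^ 2 * (1 + t ^ 2)) / 2).
Proof. unfold gauss; rewrite <- exp_plus; f_equal; field. Qed.

Lemma continuous_everywhere_gauss : continuous_everywhere gauss.
Proof. unfold gauss; solve_continuity. Qed.

Lemma is_lim_gauss : is_lim gauss p_infty 0.
Proof.
apply (is_lim_le_le_loc (fun _ => 0) (fun x => exp (- x))).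
- exists 2; intros x Hx; split; [apply Rlt_le, gauss_pos|].
  apply exp_le_exp; nra.
- apply is_lim_const.
- apply is_lim_exp_neg.
Qed.

Definition gauss_int (x : R) := RInt gauss 0 x.

Lemma is_derive_gauss_int (x : R) : is_derive gauss_int x (gauss x).
Proof.
apply (is_derive_RInt (V:=R_NormedModule) gauss gauss_int 0 x).
- apply filter_forall; intro b; apply (RInt_correct (V:=R_CompleteNormedModule)).
  apply ex_RInt_continuous_everywhere, continuous_everywhere_gauss.
- apply continuous_everywhere_gauss.
Qed.

Lemma gauss_int_ge_0 (x : R) : 0 <= x -> 0 <= gauss_int x.
Proof.
intros Hx; apply RInt_ge_0; [lra|apply ex_RInt_continuous_everywhere, continuous_everywhere_gauss|].
intros; apply Rlt_le, gauss_pos.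
Qed.

(* Feynman's trick: [2 feynman x + gauss_int x ^ 2] has zero derivative and equals
   [PI / 2] at [0], while [feynman x -> 0]. *)
Definition feynman_integrand (x t : R) := exp (- (x ^ 2 * (1 + t ^ 2)) / 2) / (1 + t ^ 2).

Definition feynman (x : R) := RInt (feynman_integrand x) 0 1.

Lemma one_plus_sqr_pos (t : R) : 0 < 1 + t ^ 2.
Proof. nra. Qed.

Lemma continuous_everywhere_feynman_integrand (x : R) :
  continuous_everywhere (feynman_integrand x).
Proof. unfold feynman_integrand; solve_continuity; generalize (one_plus_sqr_pos x0); lra. Qed.

Lemma Derive_feynman_integrand (x t : R) :
  Derive (fun y => feynman_integrand y t) x = - x * exp (- (x ^ 2 * (1 + t ^ 2)) / 2).
Proof.
apply is_derive_unique; unfold feynman_integrand; generalize (one_plus_sqr_pos t); intro.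
auto_derive; [lra|].
replace (exp (- (x * (x * 1) * (1 + t * (t * 1))) * / 2))
  with (exp (- (x ^ 2 * (1 + t ^ 2)) / 2)) by (f_equal; field).
field; lra.
Qed.

Lemma continuity_2d_Derive_feynman_integrand (x t : R) :
  continuity_2d_pt (fun u v => Derive (fun y => feynman_integrand y v) u) x t.
Proof.
apply (continuity_2d_pt_ext (fun u v => - u * exp (u * u * (1 + v * v) * - / 2))).
{ intros u v; rewrite Derive_feynman_integrand; do 2 f_equal; field. }
apply continuity_2d_pt_mult; [apply continuity_2d_pt_opp, continuity_2d_pt_id1|].
apply (continuity_1d_2d_pt_comp exp (fun u v => u * u * (1 + v * v) * - / 2)).
- apply continuity_pt_filterlim, continuous_exp.
- repeat apply continuity_2d_pt_mult; try apply continuity_2d_pt_id1; try apply continuity_2d_pt_const.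
  apply continuity_2d_pt_plus; [apply continuity_2d_pt_const|].
  apply continuity_2d_pt_mult; apply continuity_2d_pt_id2.
Qed.

Lemma RInt_comp_scal_0 (f : R -> R) (x : R) :
  continuous_everywhere f -> RInt (fun t => x * f (x * t)) 0 1 = RInt f 0 x.
Proof.
intros Hf; assert (H := RInt_comp_lin f x 0 0 1).
replace (x * 0 + 0) with 0 in H by ring; replace (x * 1 + 0) with x in H by ring.
rewrite <- H by (apply ex_RInt_continuous_everywhere, Hf).
apply RInt_ext; intros; unfold scal; simpl; unfold mult; simpl; rewrite Rplus_0_r; reflexivity.
Qed.

Lemma is_derive_feynman (x : R) : is_derive feynman x (- gauss x * gauss_int x).
Proof.
replace (- gauss x * gauss_int x)
  with (RInt (fun t => Derive (fun y => feynman_integrand y t) x) 0 1).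
- apply is_derive_RInt_param.
  + apply filter_forall; intros y t _; unfold feynman_integrand.
    generalize (one_plus_sqr_pos t); intro; auto_derive; lra.
  + intros t _; apply continuity_2d_Derive_feynman_integrand.
  + apply filter_forall; intros y.
    apply ex_RInt_continuous_everywhere, continuous_everywhere_feynman_integrand.
- rewrite (RInt_ext _ (fun t => - gauss x * (x * gauss (x * t)))).
  2:{ intros t _; rewrite Derive_feynman_integrand, <- gauss_mul; lra. }
  rewrite (RInt_scal (V:=R_CompleteNormedModule)), RInt_comp_scal_0 by
    (try apply ex_RInt_continuous_everywhere; try apply continuous_everywhere_scal;
     try apply continuous_everywhere_comp_scal; apply continuous_everywhere_gauss).
  reflexivity.
Qed.

Lemma feynman_integrand_0 (t : R) : feynman_integrand 0 t = / (1 + t ^ 2).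
Proof.
unfold feynman_integrand; replace (- (0 ^ 2 * (1 + t ^ 2)) / 2) with 0 by field.
rewrite exp_0; generalize (one_plus_sqr_pos t); intro; field; lra.
Qed.

Lemma feynman_0 : feynman 0 = PI / 4.
Proof.
unfold feynman; rewrite (RInt_ext _ (fun t => / (1 + t ^ 2))) by (intros; apply feynman_integrand_0).
rewrite (is_RInt_unique _ 0 1 (minus (atan 1) (atan 0))).
- unfold minus, plus, opp; simpl; rewrite atan_1, atan_0; field.
- apply (is_RInt_derive (V:=R_CompleteNormedModule) atan).
  + intros; apply is_derive_Reals, derivable_pt_lim_atan.
  + intros t _; apply (ex_derive_continuous (K:=R_AbsRing) (V:=R_NormedModule)); auto_derive.
    generalize (one_plus_sqr_pos t); lra.
Qed.

Lemma feynman_gauss_int (x : R) : 2 * feynman x + gauss_int x ^ 2 = PI / 2.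
Proof.
transitivity (2 * feynman 0 + gauss_int 0 ^ 2).
- apply (is_derive_0_const (fun x => 2 * feynman x + gauss_int x ^ 2)); intros y.
  replace 0 with (2 * (- gauss y * gauss_int y) + INR 2 * gauss y * gauss_int y ^ 1)
    by (simpl; ring).
  apply (is_derive_plus (K:=R_AbsRing) (V:=R_NormedModule)).
  + apply is_derive_scal, is_derive_feynman.
  + apply (is_derive_pow gauss_int 2), is_derive_gauss_int.
- unfold gauss_int; rewrite feynman_0, RInt_point; unfold zero; simpl; field.
Qed.

Lemma feynman_integrand_bounds (x t : R) : 0 <= feynman_integrand x t <= gauss x.
Proof.
unfold feynman_integrand; rewrite <- gauss_mul.
generalize (gauss_pos x) (gauss_pos (x * t)) (gauss_le_1 (x * t)) (one_plus_sqr_pos t); intros.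
split; [apply Rlt_le, Rdiv_lt_0_compat; nra|].
apply Rmult_le_reg_r with (1 + t ^ 2); [lra|].
unfold Rdiv; rewrite Rmult_assoc, Rinv_l by lra; nra.
Qed.

Lemma feynman_bounds (x : R) : 0 <= feynman x <= gauss x.
Proof.
assert (Hi := ex_RInt_continuous_everywhere _ 0 1 (continuous_everywhere_feynman_integrand x)).
split.
- apply RInt_ge_0; [lra|exact Hi|intros; apply feynman_integrand_bounds].
- replace (gauss x) with (RInt (fun _ => gauss x) 0 1)
    by (rewrite RInt_const; unfold scal; simpl; unfold mult; simpl; lra).
  apply RInt_le; [lra|exact Hi|apply ex_RInt_const|intros; apply feynman_integrand_bounds].
Qed.

Lemma is_lim_feynman : is_lim feynman p_infty 0.
Proof.
apply (is_lim_le_le_loc (fun _ => 0) gauss); [|apply is_lim_const|apply is_lim_gauss].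
exists 0; intros; apply feynman_bounds.
Qed.

Lemma is_RInt_0_infty_gauss : is_RInt_0_infty gauss (sqrt (PI / 2)).
Proof.
apply (is_lim_ext_loc (fun x => sqrt (PI / 2 - 2 * feynman x))).
{ exists 0; intros x Hx; rewrite <- (feynman_gauss_int x).
  replace (2 * feynman x + gauss_int x ^ 2 - 2 * feynman x) with (gauss_int x ^ 2) by ring.
  apply sqrt_pow2, gauss_int_ge_0; lra. }
replace (sqrt (PI / 2)) with (sqrt (PI / 2 - 2 * 0)) by (f_equal; ring).
apply (is_lim_comp_continuous (fun x => PI / 2 - 2 * feynman x) sqrt); [|intros; apply continuous_sqrt].
apply is_lim_minus'; [apply is_lim_const|].
replace (Finite (2 * 0)) with (Rbar_mult 2 0) by (simpl; f_equal; ring).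
apply is_lim_scal_l, is_lim_feynman.
Qed.

(** * The normal density and the tail function [Q] *)

Lemma phi_0_eq : phi 0 = / sqrt (2 * PI).
Proof. unfold phi; replace (- 0 ^ 2 / 2) with 0 by field; rewrite exp_0; ring. Qed.

Lemma phi_eq (x : R) : phi x = phi 0 * gauss x.
Proof. rewrite phi_0_eq; reflexivity. Qed.

Lemma phi_0_pos : 0 < phi 0.
Proof. rewrite phi_0_eq; apply Rinv_0_lt_compat, sqrt_lt_R0; generalize PI_RGT_0; lra. Qed.

Lemma two_div_PI_eq : 2 / PI = 4 * phi 0 ^ 2.
Proof.
assert (HPI := PI_RGT_0).
rewrite phi_0_eq, pow_inv, pow2_sqrt by lra; field; lra.
Qed.

Lemma ex_derive_phi (x : R) : ex_derive phi x.
Proof. unfold phi; auto_derive; auto. Qed.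

#[local] Hint Resolve ex_derive_phi : ex_derive.

Lemma is_derive_phi (x : R) : is_derive phi x (- x * phi x).
Proof.
apply (is_derive_ext (fun y => phi 0 * gauss y)); [intros; symmetry; apply phi_eq|].
rewrite (phi_eq x); unfold gauss; auto_derive; auto.
replace (- (x * (x * 1)) * / 2) with (- x ^ 2 / 2) by field; field.
Qed.

Lemma continuous_everywhere_phi : continuous_everywhere phi.
Proof. solve_continuity. Qed.

Lemma phi_pos (x : R) : 0 < phi x.
Proof. rewrite (phi_eq x); apply Rmult_lt_0_compat; [apply phi_0_pos|apply gauss_pos]. Qed.

Lemma phi_opp (x : R) : phi (- x) = phi x.
Proof. unfold phi; do 3 f_equal; ring. Qed.

Lemma phi_le_phi_0 (x : R) : phi x <= phi 0.
Proof. rewrite (phi_eq x); generalize phi_0_pos (gauss_le_1 x); nra. Qed.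

Lemma phi_decreasing (u t : R) : 0 <= u <= t -> phi t <= phi u.
Proof.
intros H; rewrite (phi_eq t), (phi_eq u); apply Rmult_le_compat_l; [apply Rlt_le, phi_0_pos|].
apply exp_le_exp; nra.
Qed.

Lemma is_RInt_0_infty_phi : is_RInt_0_infty phi (1 / 2).
Proof.
replace (1 / 2) with (phi 0 * sqrt (PI / 2)).
- apply (is_RInt_0_infty_ext (fun x => phi 0 * gauss x)); [intros; symmetry; apply phi_eq|].
  apply is_RInt_0_infty_scal; [apply continuous_everywhere_gauss|apply is_RInt_0_infty_gauss].
- assert (HPI := PI_RGT_0); assert (0 < sqrt (PI / 2)) by (apply sqrt_lt_R0; lra).
  rewrite phi_0_eq; replace (2 * PI) with (2 ^ 2 * (PI / 2)) by field.
  rewrite sqrt_mult, sqrt_pow2 by lra; field; lra.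
Qed.

Definition phi_int (x : R) := RInt phi 0 x.

Lemma is_derive_phi_int (x : R) : is_derive phi_int x (phi x).
Proof.
apply (is_derive_RInt (V:=R_NormedModule) phi phi_int 0 x); [|apply continuous_everywhere_phi].
apply filter_forall; intro b; apply (RInt_correct (V:=R_CompleteNormedModule)).
apply ex_RInt_continuous_everywhere, continuous_everywhere_phi.
Qed.

Lemma ex_derive_phi_int (x : R) : ex_derive phi_int x.
Proof. exists (phi x); apply is_derive_phi_int. Qed.

#[local] Hint Resolve ex_derive_phi_int : ex_derive.

Lemma phi_int_opp (x : R) : phi_int (- x) = - phi_int x.
Proof.
unfold phi_int; rewrite <- (RInt_reflect_even phi x continuous_everywhere_phi phi_opp).
rewrite <- (opp_RInt_swap (V:=R_CompleteNormedModule)); [reflexivity|].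
apply ex_RInt_continuous_everywhere, continuous_everywhere_phi.
Qed.

Lemma phi_int_abs (x : R) : Rabs (phi_int x) = phi_int (Rabs x).
Proof.
assert (Hnn : forall y, 0 <= y -> 0 <= phi_int y).
{ intros y Hy; apply RInt_ge_0; [lra|apply ex_RInt_continuous_everywhere, continuous_everywhere_phi|].
  intros; apply Rlt_le, phi_pos. }
destruct (Rle_lt_dec 0 x).
- rewrite !Rabs_pos_eq; auto.
- rewrite (Rabs_left x), <- Rabs_Ropp, <- phi_int_opp by lra; apply Rabs_pos_eq, Hnn; lra.
Qed.

Lemma phi_int_abs_le (x : R) : Rabs (phi_int x) <= phi 0 * Rabs x.
Proof.
rewrite phi_int_abs; unfold phi_int.
replace (phi 0 * Rabs x) with (RInt (fun _ => phi 0) 0 (Rabs x))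
  by (rewrite RInt_const; unfold scal; simpl; unfold mult; simpl; lra).
apply RInt_le; [apply Rabs_pos|apply ex_RInt_continuous_everywhere, continuous_everywhere_phi|
  apply ex_RInt_const|intros; apply phi_le_phi_0].
Qed.

Lemma phi_int_add_phi_le (u : R) : 0 <= u -> phi_int u + phi (u + 1) <= 1 / 2.
Proof.
intros Hu; assert (Hc := continuous_everywhere_phi).
rewrite <- (RInt_le_is_RInt_0_infty phi (u + 1) (1 / 2)); auto;
  [|lra|intros; apply Rlt_le, phi_pos|apply is_RInt_0_infty_phi].
rewrite <- (RInt_Chasles_R phi 0 u (u + 1)) by auto.
apply Rplus_le_compat_l.
replace (phi (u + 1)) with (RInt (fun _ => phi (u + 1)) u (u + 1)) at 1
  by (rewrite RInt_const; unfold scal; simpl; unfold mult; simpl; lra).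
apply RInt_le; [lra|apply ex_RInt_const|apply ex_RInt_continuous_everywhere; auto|].
intros; apply phi_decreasing; lra.
Qed.

Lemma Q_eq (x : R) : Q x = 1 / 2 - phi_int x.
Proof.
unfold Q; apply (is_RInt_gen_unique (V:=R_CompleteNormedModule)).
apply is_RInt_gen_at_point_p_infty; [apply continuous_everywhere_phi|].
apply (is_lim_ext (fun b => RInt phi 0 b - phi_int x)).
{ intros b; unfold phi_int; rewrite <- (RInt_Chasles_R phi 0 x b) by apply continuous_everywhere_phi.
  lra. }
apply is_lim_minus'; [apply is_RInt_0_infty_phi|apply is_lim_const].
Qed.

Lemma ex_derive_Q (x : R) : ex_derive Q x.
Proof.
apply (ex_derive_ext (fun x => 1 / 2 - phi_int x)); [intros; symmetry; apply Q_eq|].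
auto_derive; repeat split; auto with ex_derive.
Qed.

#[local] Hint Resolve ex_derive_Q : ex_derive.

Lemma Q_opp (x : R) : Q (- x) = 1 - Q x.
Proof. rewrite !Q_eq, phi_int_opp; field. Qed.

Lemma Q_mul_one_sub_Q (x : R) : Q x * (1 - Q x) = 1 / 4 - phi_int x ^ 2.
Proof. rewrite Q_eq; field. Qed.

Lemma Q_mul_one_sub_Q_ge (x : R) : phi (Rabs x + 1) / 2 <= Q x * (1 - Q x).
Proof.
rewrite Q_mul_one_sub_Q.
assert (H := phi_int_add_phi_le (Rabs x) (Rabs_pos x)); rewrite <- phi_int_abs in H.
rewrite <- (pow2_abs (phi_int x)).
generalize (Rabs_pos (phi_int x)) (phi_pos (Rabs x + 1)); intros; nra.
Qed.

Lemma Q_mul_one_sub_Q_pos (x : R) : 0 < Q x * (1 - Q x).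
Proof. eapply Rlt_le_trans; [|apply Q_mul_one_sub_Q_ge]; generalize (phi_pos (Rabs x + 1)); lra. Qed.

(** * Size of [xi] *)

Lemma xi_opp (s : R) : xi (- s) = xi s.
Proof. unfold xi; rewrite phi_opp, Q_opp; f_equal; ring. Qed.

Lemma xi_pos (s : R) : 0 < xi s.
Proof. apply Rdiv_lt_0_compat; [generalize (phi_pos s); nra|apply Q_mul_one_sub_Q_pos]. Qed.

Lemma ex_derive_xi (x : R) : ex_derive xi x.
Proof.
unfold xi; auto_derive; repeat split; auto with ex_derive.
generalize (Q_mul_one_sub_Q_pos x); lra.
Qed.

#[local] Hint Resolve ex_derive_xi : ex_derive.

Definition env (s : R) := exp (- s ^ 2 / 2 + Rabs s + 1 / 2).

Lemma phi_sqr_div_phi (s : R) : phi s ^ 2 / phi (Rabs s + 1) = phi 0 * env s.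
Proof.
rewrite (phi_eq s), (phi_eq (Rabs s + 1)); unfold gauss, env.
replace (- s ^ 2 / 2 + Rabs s + 1 / 2)
  with (- s ^ 2 / 2 + - s ^ 2 / 2 + - (- (Rabs s + 1) ^ 2 / 2))
  by (rewrite <- (pow2_abs s); field).
rewrite !exp_plus, exp_Ropp.
generalize phi_0_pos (exp_pos (- (Rabs s + 1) ^ 2 / 2)); intros; field; lra.
Qed.

Lemma xi_le_env (s : R) : xi s <= 2 * phi 0 * env s.
Proof.
replace (2 * phi 0 * env s) with (phi s ^ 2 / (phi (Rabs s + 1) / 2))
  by (rewrite Rmult_assoc, <- phi_sqr_div_phi; generalize (phi_pos (Rabs s + 1)); intro; field; lra).
apply Rmult_le_compat_l; [generalize (phi_pos s); nra|].
apply Rinv_le_contravar; [generalize (phi_pos (Rabs s + 1)); lra|apply Q_mul_one_sub_Q_ge].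
Qed.

Lemma phi_le_env (s : R) : phi s <= phi 0 * env s.
Proof.
rewrite (phi_eq s); apply Rmult_le_compat_l; [apply Rlt_le, phi_0_pos|].
apply exp_le_exp; generalize (Rabs_pos s); lra.
Qed.

Lemma env_le_exp_1 (s : R) : env s <= exp 1.
Proof.
apply exp_le_exp; rewrite <- (pow2_abs s); generalize (Rabs s); intro a.
assert (0 <= (a - 1) ^ 2) by apply pow2_ge_0; nra.
Qed.

Lemma xi_le (s : R) : xi s <= 2 * phi 0 * exp 1.
Proof.
apply Rle_trans with (1 := xi_le_env s).
apply Rmult_le_compat_l; [generalize phi_0_pos; lra|apply env_le_exp_1].
Qed.

Lemma pow_le_exp_mul (k : nat) (s : R) : 0 <= s -> s ^ k <= exp (INR k * s).
Proof.
intros Hs; induction k as [|k IH].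
- simpl; rewrite Rmult_0_l, exp_0; lra.
- rewrite S_INR, Rmult_plus_distr_r, Rmult_1_l, exp_plus; simpl; rewrite Rmult_comm.
  apply Rmult_le_compat; auto; [apply pow_le; auto|generalize (exp_ineq1_le s); lra].
Qed.

Lemma pow_mul_env_le (k : nat) (s : R) :
  0 <= s -> s ^ k * env s <= exp ((INR k + 2) ^ 2 / 2 + 1 / 2) * exp (- s).
Proof.
intros Hs; apply Rle_trans with (exp (INR k * s) * env s).
- apply Rmult_le_compat_r; [apply Rlt_le, exp_pos|apply pow_le_exp_mul; auto].
- unfold env; rewrite Rabs_pos_eq by auto; rewrite <- !exp_plus; apply exp_le_exp.
  assert (0 <= (s - (INR k + 2)) ^ 2) by apply pow2_ge_0; nra.
Qed.

Lemma ex_RInt_0_infty_env_dominated (f : R -> R) (C : R) (k : nat) :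
  continuous_everywhere f -> 0 <= C ->
  (forall s, 0 <= s -> 0 <= f s <= C * (s ^ k * env s)) -> ex_RInt_0_infty f.
Proof.
intros Hf HC Hb; set (K := exp ((INR k + 2) ^ 2 / 2 + 1 / 2)).
apply (is_RInt_0_infty_dominated f (fun s => C * K * exp (- s)) (C * K * 1)); auto.
- apply continuous_everywhere_scal; solve_continuity.
- intros s Hs; rewrite Rabs_pos_eq, Rmult_assoc by apply Hb, Hs.
  eapply Rle_trans; [apply Hb, Hs|].
  apply Rmult_le_compat_l; auto; apply pow_mul_env_le; auto.
- apply is_RInt_0_infty_scal; [solve_continuity|apply is_RInt_0_infty_exp_neg].
Qed.

Lemma phi_sqr_sub_le (u : R) : Rabs (phi u ^ 2 - phi 0 ^ 2) <= phi 0 ^ 2 * u ^ 2.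
Proof.
assert (Hg : gauss u ^ 2 = exp (- u ^ 2)).
{ replace (gauss u ^ 2) with (gauss u * gauss u) by ring.
  unfold gauss; rewrite <- exp_plus; f_equal; field. }
assert (H1 := exp_ineq1_le (- u ^ 2)).
assert (H2 : gauss u ^ 2 <= 1) by (generalize (gauss_pos u) (gauss_le_1 u); nra).
rewrite (phi_eq u), Rpow_mult_distr, <- Rabs_Ropp, Rabs_pos_eq;
  generalize (pow2_ge_0 (phi 0)); nra.
Qed.

Lemma phi_int_sqr_le (u : R) : phi_int u ^ 2 <= phi 0 ^ 2 * u ^ 2.
Proof.
rewrite <- (pow2_abs (phi_int u)), <- (pow2_abs u), <- Rpow_mult_distr.
apply pow_incr; split; [apply Rabs_pos|apply phi_int_abs_le].
Qed.

Lemma xi_sub_two_div_PI_near_0 (u : R) : Rabs u <= 1 ->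
  Rabs (xi u - 2 / PI) <= 2 * (phi 0 ^ 2 + 4 * phi 0 ^ 4) / phi 2 * u ^ 2.
Proof.
intros Hu.
assert (Hp2 := phi_pos 2).
assert (Hden : phi 2 / 2 <= Q u * (1 - Q u)).
{ apply Rle_trans with (2 := Q_mul_one_sub_Q_ge u).
  apply Rmult_le_compat_r; [lra|apply phi_decreasing; generalize (Rabs_pos u); lra]. }
assert (Hnum : Rabs (phi u ^ 2 - phi 0 ^ 2 + 4 * phi 0 ^ 2 * phi_int u ^ 2)
               <= (phi 0 ^ 2 + 4 * phi 0 ^ 4) * u ^ 2).
{ eapply Rle_trans; [apply Rabs_triang|].
  rewrite (Rabs_pos_eq (4 * _ * _)) by (generalize (pow2_ge_0 (phi 0)) (pow2_ge_0 (phi_int u)); nra).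
  generalize (phi_sqr_sub_le u) (phi_int_sqr_le u) (pow2_ge_0 (phi 0)); intros; nra. }
replace (xi u - 2 / PI)
  with ((phi u ^ 2 - phi 0 ^ 2 + 4 * phi 0 ^ 2 * phi_int u ^ 2) / (Q u * (1 - Q u))).
2:{ unfold xi; rewrite two_div_PI_eq, Q_mul_one_sub_Q in *; field; lra. }
unfold Rdiv; rewrite Rabs_mult, Rabs_inv, (Rabs_pos_eq (Q u * _)) by lra.
replace (2 * (phi 0 ^ 2 + 4 * phi 0 ^ 4) * / phi 2 * u ^ 2)
  with ((phi 0 ^ 2 + 4 * phi 0 ^ 4) * u ^ 2 * / (phi 2 / 2)) by (field; lra).
apply Rmult_le_compat; auto using Rabs_pos.
- apply Rlt_le, Rinv_0_lt_compat; lra.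
- apply Rinv_le_contravar; lra.
Qed.

Lemma xi_sub_two_div_PI_le : exists C, forall u, Rabs (xi u - 2 / PI) <= C * u ^ 2.
Proof.
set (C0 := 2 * (phi 0 ^ 2 + 4 * phi 0 ^ 4) / phi 2).
set (M := 2 * phi 0 * exp 1 + 2 / PI).
assert (HC0 : 0 <= C0).
{ unfold C0; generalize (phi_pos 2) (pow2_ge_0 (phi 0)) (pow_le (phi 0) 4 (Rlt_le _ _ phi_0_pos)).
  intros; apply Rmult_le_pos; [lra|apply Rlt_le, Rinv_0_lt_compat; lra]. }
assert (HM : 0 <= M).
{ unfold M; generalize phi_0_pos (exp_pos 1) PI_RGT_0; intros.
  assert (0 < 2 / PI) by (apply Rdiv_lt_0_compat; lra); nra. }
exists (C0 + M); intros u; assert (Hu2 := pow2_ge_0 u).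
destruct (Rle_lt_dec (Rabs u) 1) as [Hu|Hu].
- apply Rle_trans with (C0 * u ^ 2); [apply xi_sub_two_div_PI_near_0, Hu|nra].
- assert (1 <= u ^ 2) by (rewrite <- (pow2_abs u); nra).
  assert (Hxi : Rabs (xi u - 2 / PI) <= M).
  { unfold M; generalize (xi_pos u) (xi_le u) PI_RGT_0; intros.
    assert (0 < 2 / PI) by (apply Rdiv_lt_0_compat; lra).
    apply Rabs_le; lra. }
  nra.
Qed.

Lemma ex_RInt_0_infty_pow_phi (k : nat) : ex_RInt_0_infty (fun s => s ^ k * phi s).
Proof.
apply (ex_RInt_0_infty_env_dominated _ (phi 0) k); [solve_continuity|apply Rlt_le, phi_0_pos|].
intros s Hs; generalize (pow_le s k Hs) (phi_pos s) (phi_le_env s); nra.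
Qed.

Lemma ex_RInt_0_infty_xi_pow (k : nat) : ex_RInt_0_infty (fun u => xi u * u ^ k).
Proof.
apply (ex_RInt_0_infty_env_dominated _ (2 * phi 0) k);
  [solve_continuity|generalize phi_0_pos; lra|].
intros s Hs; generalize (pow_le s k Hs) (xi_pos s) (xi_le_env s); nra.
Qed.

Lemma ex_RInt_0_infty_zeta_integrand (k : nat) (r : R) :
  ex_RInt_0_infty (fun s => s ^ k * xi (r * s) * phi s).
Proof.
assert (Hp := phi_0_pos); assert (He := exp_pos 1).
apply (ex_RInt_0_infty_env_dominated _ (2 * phi 0 * exp 1 * phi 0) k); [solve_continuity|nra|].
intros s Hs; generalize (pow_le s k Hs) (xi_pos (r * s)) (xi_le (r * s)) (phi_pos s) (phi_le_env s).
intros; split; [apply Rmult_le_pos; nra|].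
replace (2 * phi 0 * exp 1 * phi 0 * (s ^ k * env s))
  with (s ^ k * (2 * phi 0 * exp 1) * (phi 0 * env s)) by ring.
apply Rmult_le_compat; try apply Rmult_le_compat_l; nra.
Qed.

Lemma ex_RInt_0_infty_xi_pow_phi_div (k : nat) (r : R) : r <> 0 ->
  ex_RInt_0_infty (fun u => xi u * u ^ k * phi (u / r)).
Proof.
intros Hr; assert (Hp := phi_0_pos).
apply (ex_RInt_0_infty_env_dominated _ (2 * phi 0 * phi 0) k); [solve_continuity|nra|].
intros s Hs; generalize (pow_le s k Hs) (xi_pos s) (xi_le_env s) (phi_pos (s / r)) (phi_le_phi_0 (s / r)).
intros; split; [apply Rmult_le_pos; nra|].
replace (2 * phi 0 * phi 0 * (s ^ k * env s)) with (2 * phi 0 * env s * s ^ k * phi 0) by ring.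
apply Rmult_le_compat; try apply Rmult_le_compat_r; nra.
Qed.

Lemma is_lim_mul_phi : is_lim (fun b => b * phi b) p_infty 0.
Proof.
set (K := exp ((INR 1 + 2) ^ 2 / 2 + 1 / 2)).
apply (is_lim_le_le_loc (fun _ => 0) (fun b => phi 0 * K * exp (- b))).
- exists 0; intros b Hb; split; [apply Rmult_le_pos; [lra|apply Rlt_le, phi_pos]|].
  apply Rle_trans with (phi 0 * (b ^ 1 * env b)).
  + rewrite pow_1; generalize (phi_le_env b) phi_0_pos; nra.
  + rewrite Rmult_assoc; apply Rmult_le_compat_l; [apply Rlt_le, phi_0_pos|].
    apply pow_mul_env_le; lra.
- apply is_lim_const.
- replace (Finite 0) with (Rbar_mult (phi 0 * K) 0) by (simpl; f_equal; ring).
  apply is_lim_scal_l, is_lim_exp_neg.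
Qed.

Lemma is_RInt_0_infty_sqr_phi : is_RInt_0_infty (fun s => s ^ 2 * phi s) (1 / 2).
Proof.
apply (is_lim_ext (fun b => phi_int b - b * phi b)).
{ intros b; symmetry; apply (is_RInt_unique (V:=R_CompleteNormedModule)).
  replace (phi_int b - b * phi b) with (minus (phi_int b - b * phi b) (phi_int 0 - 0 * phi 0))
    by (unfold phi_int; rewrite RInt_point; unfold minus, plus, opp, zero; simpl; ring).
  apply (is_RInt_derive (fun s => phi_int s - s * phi s)).
  - intros x _; auto_derive; auto with ex_derive.
    replace (Derive (fun y => phi_int y) x) with (phi x)
      by (symmetry; apply is_derive_unique, is_derive_phi_int).
    replace (Derive (fun y => phi y) x) with (- x * phi x)
      by (symmetry; apply is_derive_unique, is_derive_phi).
    ring.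
  - intros x _; revert x; solve_continuity. }
replace (1 / 2) with (1 / 2 - 0) by ring.
apply is_lim_minus'; [apply is_RInt_0_infty_phi|apply is_lim_mul_phi].
Qed.

Lemma pow_opp_even (m : nat) (x : R) : (- x) ^ (2 * m) = x ^ (2 * m).
Proof. rewrite !pow_sqr; f_equal; ring. Qed.

Lemma zeta_eq (m : nat) (r L : R) :
  is_RInt_0_infty (fun s => s ^ (2 * m) * xi (r * s) * phi s) L -> zeta (2 * m) r = 2 * L.
Proof.
intros H; unfold zeta; apply RInt_gen_even; [solve_continuity| |exact H].
intros x; rewrite pow_opp_even, phi_opp.
replace (r * - x) with (- (r * x)) by ring; rewrite xi_opp; reflexivity.
Qed.

Definition xi_moment (k : nat) :=
  / sqrt (2 * PI) * RInt_gen (fun u => xi u * u ^ k) (Rbar_locally m_infty) (Rbar_locally p_infty).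

Lemma xi_moment_eq (m : nat) (L : R) :
  is_RInt_0_infty (fun u => xi u * u ^ (2 * m)) L -> xi_moment (2 * m) = 2 * phi 0 * L.
Proof.
intros H; unfold xi_moment; rewrite (RInt_gen_even _ L), phi_0_eq; [ring|solve_continuity| |exact H].
intros x; rewrite pow_opp_even, xi_opp; reflexivity.
Qed.

Lemma A0_eq : A0 = xi_moment 0.
Proof.
destruct (ex_RInt_0_infty_xi_pow 0) as [L H].
rewrite (xi_moment_eq 0 L H : xi_moment 0 = _); unfold A0; rewrite (RInt_gen_even _ L), phi_0_eq.
- ring.
- solve_continuity.
- intros; apply xi_opp.
- apply (is_RInt_0_infty_ext _ _ _ (fun x _ => Rmult_1_r (xi x)) H).
Qed.

Lemma A2_eq : A2 = xi_moment 2.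
Proof. reflexivity. Qed.

Lemma xi_moment_pos (m : nat) : 0 < xi_moment (2 * m).
Proof.
destruct (ex_RInt_0_infty_xi_pow (2 * m)) as [L H]; rewrite (xi_moment_eq m L H).
assert (Hc : continuous_everywhere (fun u => xi u * u ^ (2 * m))) by solve_continuity.
apply Rmult_lt_0_compat; [generalize phi_0_pos; lra|].
apply Rlt_le_trans with (RInt (fun u => xi u * u ^ (2 * m)) 0 1).
- apply RInt_gt_0; [lra| |intros; apply Hc].
  intros x Hx; apply Rmult_lt_0_compat; [apply xi_pos|apply pow_lt; lra].
- apply RInt_le_is_RInt_0_infty; auto; [lra|].
  intros x Hx; apply Rmult_le_pos; [apply Rlt_le, xi_pos|apply pow_le; auto].
Qed.

(** * Asymptotics of [zeta] *)

Lemma zeta_small_r (m : nat) (mu : R) :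
  is_RInt_0_infty (fun s => s ^ (2 * m) * phi s) (mu / 2) ->
  exists C, forall r, Rabs (zeta (2 * m) r - 2 / PI * mu) <= C * r ^ 2.
Proof.
intros Hmu.
destruct xi_sub_two_div_PI_le as [C HC].
destruct (ex_RInt_0_infty_pow_phi (2 * m + 2)) as [M HM].
exists (2 * C * M); intros r.
destruct (ex_RInt_0_infty_zeta_integrand (2 * m) r) as [L HL].
rewrite (zeta_eq m r L HL).
assert (Hd : Rabs (L - 2 / PI * (mu / 2)) <= C * r ^ 2 * M).
{ apply (is_RInt_0_infty_dist_le (fun s => s ^ (2 * m) * xi (r * s) * phi s)
    (fun s => 2 / PI * (s ^ (2 * m) * phi s)) (fun s => C * r ^ 2 * (s ^ (2 * m + 2) * phi s)));
    try solve_continuity; auto; try (apply is_RInt_0_infty_scal; auto; solve_continuity).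
  intros s Hs.
  replace (s ^ (2 * m) * xi (r * s) * phi s - 2 / PI * (s ^ (2 * m) * phi s))
    with (s ^ (2 * m) * phi s * (xi (r * s) - 2 / PI)) by ring.
  rewrite Rabs_mult, (Rabs_pos_eq (_ * phi s)) by (generalize (pow_le s (2 * m) Hs) (phi_pos s); nra).
  replace (C * r ^ 2 * (s ^ (2 * m + 2) * phi s)) with (s ^ (2 * m) * phi s * (C * (r * s) ^ 2))
    by (rewrite pow_add; ring).
  apply Rmult_le_compat_l; [generalize (pow_le s (2 * m) Hs) (phi_pos s); nra|apply HC]. }
replace (2 * L - 2 / PI * mu) with (2 * (L - 2 / PI * (mu / 2))) by (field; apply PI_neq0).
rewrite Rabs_mult, (Rabs_pos_eq 2) by lra; lra.
Qed.

Lemma phi_0_sub_phi_le (x : R) : 0 <= phi 0 - phi x <= phi 0 * x ^ 2 / 2.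
Proof.
rewrite (phi_eq x); generalize phi_0_pos (gauss_le_1 x) (exp_ineq1_le (- x ^ 2 / 2)); unfold gauss.
intros; split; nra.
Qed.

Lemma zeta_eq_scaled (m : nat) (r L : R) : 0 < r ->
  is_RInt_0_infty (fun u => xi u * u ^ (2 * m) * phi (u / r)) L ->
  r ^ (2 * m + 1) * zeta (2 * m) r = 2 * L.
Proof.
intros Hr H; assert (Hr0 : r <> 0) by lra.
assert (Hk : r ^ (2 * m) <> 0) by (apply pow_nonzero; lra).
apply is_RInt_0_infty_comp_scal with (r := r) in H; auto; [|solve_continuity].
apply (is_RInt_0_infty_scal (/ r ^ (2 * m))) in H; [|solve_continuity].
rewrite (zeta_eq m r (/ r ^ (2 * m) * (L / r))).
- rewrite pow_add; field; auto.
- refine (is_RInt_0_infty_ext _ _ _ _ H); intros x _; cbv beta.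
  replace (r * x / r) with x by (field; auto).
  rewrite Rpow_mult_distr; field; auto.
Qed.

Lemma zeta_large_r_le (m : nat) (r Lk Lk2 : R) : 0 < r ->
  is_RInt_0_infty (fun u => xi u * u ^ (2 * m)) Lk ->
  is_RInt_0_infty (fun u => xi u * u ^ (2 * m + 2)) Lk2 ->
  Rabs (r ^ (2 * m + 1) * zeta (2 * m) r - 2 * phi 0 * Lk) <= phi 0 * Lk2 / r ^ 2.
Proof.
intros Hr Hk Hk2; assert (Hr0 : r <> 0) by lra; assert (Hr2 : 0 < r ^ 2) by (apply pow_lt; lra).
destruct (ex_RInt_0_infty_xi_pow_phi_div (2 * m) r Hr0) as [L H].
rewrite (zeta_eq_scaled m r L Hr H).
assert (Hd : Rabs (L - phi 0 * Lk) <= phi 0 / (2 * r ^ 2) * Lk2).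
{ apply (is_RInt_0_infty_dist_le (fun u => xi u * u ^ (2 * m) * phi (u / r))
    (fun u => phi 0 * (xi u * u ^ (2 * m))) (fun u => phi 0 / (2 * r ^ 2) * (xi u * u ^ (2 * m + 2))));
    try solve_continuity; auto; try (apply is_RInt_0_infty_scal; auto; solve_continuity).
  intros u Hu; assert (Hx : 0 <= xi u * u ^ (2 * m))
    by (apply Rmult_le_pos; [apply Rlt_le, xi_pos|apply pow_le; auto]).
  replace (xi u * u ^ (2 * m) * phi (u / r) - phi 0 * (xi u * u ^ (2 * m)))
    with (- (xi u * u ^ (2 * m) * (phi 0 - phi (u / r)))) by ring.
  rewrite Rabs_Ropp, Rabs_pos_eq by (generalize (phi_0_sub_phi_le (u / r)); nra).
  replace (phi 0 / (2 * r ^ 2) * (xi u * u ^ (2 * m + 2)))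
    with (xi u * u ^ (2 * m) * (phi 0 * (u / r) ^ 2 / 2)) by (rewrite pow_add; field; auto).
  apply Rmult_le_compat_l; [auto|apply phi_0_sub_phi_le]. }
replace (2 * L - 2 * phi 0 * Lk) with (2 * (L - phi 0 * Lk)) by ring.
replace (phi 0 * Lk2 / r ^ 2) with (2 * (phi 0 / (2 * r ^ 2) * Lk2)) by (field; lra).
rewrite Rabs_mult, (Rabs_pos_eq 2) by lra; lra.
Qed.

Lemma zeta_large_r (m : nat) : exists C, forall r, 0 < r ->
  Rabs (r ^ (2 * m + 1) * zeta (2 * m) r / xi_moment (2 * m) - 1) <= C / r ^ 2.
Proof.
destruct (ex_RInt_0_infty_xi_pow (2 * m)) as [Lk Hk].
destruct (ex_RInt_0_infty_xi_pow (2 * m + 2)) as [Lk2 Hk2].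
assert (HA := xi_moment_pos m); rewrite (xi_moment_eq m Lk Hk) in HA |- *.
exists (phi 0 * Lk2 / (2 * phi 0 * Lk)); intros r Hr.
assert (Hb := zeta_large_r_le m r Lk Lk2 Hr Hk Hk2).
set (A := 2 * phi 0 * Lk) in *; set (Z := r ^ (2 * m + 1) * zeta (2 * m) r) in *.
replace (Z / A - 1) with ((Z - A) / A) by (field; lra).
replace (phi 0 * Lk2 / A / r ^ 2) with (phi 0 * Lk2 / r ^ 2 / A) by (field; lra).
unfold Rdiv at 1 3; rewrite Rabs_mult, Rabs_inv, (Rabs_pos_eq A) by lra.
apply Rmult_le_compat_r; [apply Rlt_le, Rinv_0_lt_compat; lra|exact Hb].
Qed.

Theorem lemma6 :
  (* as r -> 0 : zeta_0(r) = 2/pi + O(r^2) and zeta_2(r) = 2/pi + O(r^2) *)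
  (exists C delta : R, 0 < delta /\
     forall r : R, Rabs r < delta ->
       Rabs (zeta 0 r - 2 / PI) <= C * r ^ 2 /\
       Rabs (zeta 2 r - 2 / PI) <= C * r ^ 2) /\
  (* as r -> +oo : zeta_0(r) = (A0/r)(1 + O(1/r^2)),
                   zeta_2(r) = (A2/r^3)(1 + O(1/r^2)) *)
  (exists (C M : R) (g0 g2 : R -> R),
     forall r : R, M < r ->
       zeta 0 r = A0 / r * (1 + g0 r) /\ Rabs (g0 r) <= C / r ^ 2 /\
       zeta 2 r = A2 / r ^ 3 * (1 + g2 r) /\ Rabs (g2 r) <= C / r ^ 2).
Proof.
split.
- destruct (zeta_small_r 0 1) as [C0 H0].
  { apply (is_RInt_0_infty_ext phi); [intros; simpl; ring|apply is_RInt_0_infty_phi]. }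
  destruct (zeta_small_r 1 1 is_RInt_0_infty_sqr_phi) as [C2 H2].
  exists (Rmax C0 C2), 1; split; [lra|intros r _; rewrite <- (Rmult_1_r (2 / PI))].
  assert (Hr2 := pow2_ge_0 r).
  split; [eapply Rle_trans; [apply H0|]|eapply Rle_trans; [apply H2|]];
    apply Rmult_le_compat_r; auto using Rmax_l, Rmax_r.
- destruct (zeta_large_r 0) as [C0 H0]; destruct (zeta_large_r 1) as [C2 H2].
  assert (HA0 := xi_moment_pos 0); assert (HA2 := xi_moment_pos 1).
  exists (Rmax C0 C2), 0, (fun r => r ^ 1 * zeta 0 r / xi_moment 0 - 1),
    (fun r => r ^ 3 * zeta 2 r / xi_moment 2 - 1).
  intros r Hr; rewrite A0_eq, A2_eq; simpl in HA0, HA2.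
  assert (Hr2 : 0 <= / r ^ 2) by (apply Rlt_le, Rinv_0_lt_compat, pow_lt; lra).
  repeat split.
  + field; lra.
  + eapply Rle_trans; [apply (H0 r Hr)|apply Rmult_le_compat_r; auto using Rmax_l].
  + field; lra.
  + eapply Rle_trans; [apply (H2 r Hr)|apply Rmult_le_compat_r; auto using Rmax_r].
Qed.
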